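(* Let $G=(V,E)$ be a finite undirected graph with $V=\{1,\dots,n\}$, and let $A,B,C\subseteq V$ be nonempty pairwise disjoint sets with $V=A\cup B\cup C$, such that $C$ separates $A$ from $B$ in $G$ and $C$ is complete in $G$. Let $N$ be a symmetric positive definite $n\times n$ real matrix and $M=N_G$. Then $M$ is positive definite if and only if all of the following hold: (1) $M_{A\cup C}=\begin{pmatrix} M_{AA} & M_{AC}\\ M_{CA} & M_{CC}\end{pmatrix}$ is positive definite; (2) $M_{B\cup C}=\begin{pmatrix} M_{CC} & M_{CB}\\ M_{BC} & M_{BB}\end{pmatrix}$ is positive definite; (3) $S_1+S_2-M_{CC}$ is positive definite, where $S_1=M_{CC}-M_{CA}M_{AA}^{-1}M_{AC}$ and $S_2=M_{CC}-M_{CB}M_{BB}^{-1}M_{BC}$. Moreover, the same equivalence holds when conditions (1) and (2) are replaced by (1') $M_{AA}$ is positive definite and (2') $M_{BB}$ is positive definite.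
   Context: For a symmetric $n\times n$ real matrix $N=(n_{ij})$, $N_G$ is defined by $(N_G)_{ij}=n_{ij}$ if $i=j$ or $(i,j)\in E$, and $0$ otherwise. For index sets $X,Y\subseteq V$, $M_{XY}$ denotes the submatrix of $M$ with rows indexed by $X$ and columns indexed by $Y$. $C$ separates $A$ from $B$ means every path in $G$ from a vertex of $A$ to a vertex of $B$ contains a vertex of $C$; $C$ complete means every two distinct vertices of $C$ are adjacent. *)

From HB Require Import structures.
From mathcomp Require Import all_boot all_order all_algebra.
Set Implicit Arguments. Unset Strict Implicit. Unset Printing Implicit Defensive.
Import Order.TTheory GRing.Theory Num.Theory.
Local Open Scope ring_scope.

(* A simple undirected graph on V = 'I_n is a symmetric irreflexive relation e. *)

Definition posdef (R : realFieldType) (m : nat) (M : 'M[R]_m) : Prop :=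
  M^T = M /\ forall x : 'cV[R]_m, x != 0 -> 0 < (x^T *m M *m x) 0 0.

Definition restrictG (R : pzRingType) (n : nat) (e : rel 'I_n) (N : 'M[R]_n)
  : 'M[R]_n :=
  \matrix_(i, j) (if (i == j) || e i j then N i j else 0).

Definition subM (R : Type) (n : nat) (X Y : {set 'I_n}) (M : 'M[R]_n)
  : 'M[R]_(#|X|, #|Y|) :=
  \matrix_(i, j) M (enum_val i) (enum_val j).

Definition separates (n : nat) (e : rel 'I_n) (C A B : {set 'I_n}) : Prop :=
  forall (a : 'I_n) (p : seq 'I_n),
    a \in A -> path e a p -> last a p \in B -> has (mem C) (a :: p).

Definition complete (n : nat) (e : rel 'I_n) (C : {set 'I_n}) : Prop :=
  forall x y, x \in C -> y \in C -> x != y -> e x y.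

From HB Require Import structures.
From mathcomp Require Import all_boot all_order all_algebra.
From mathcomp Require Import lra.
Import Order.TTheory GRing.Theory Num.Theory.
Local Open Scope ring_scope.
Set Implicit Arguments. Unset Strict Implicit. Unset Printing Implicit Defensive.

(* Since C separates A from B, no edge joins A to B, so M_AB = 0.  Splitting a
   vector as x = (a, c, b) along A, C, B and completing the squares in a and b
   gives
     x^T M x = (a + M_AA^-1 M_AC c)^T M_AA (a + M_AA^-1 M_AC c)
             + (b + M_BB^-1 M_BC c)^T M_BB (b + M_BB^-1 M_BC c)
             + c^T (S1 + S2 - M_CC) c,
   hence M is positive definite iff M_AA, M_BB and S1 + S2 - M_CC are.
   Conditions (1) and (2) lie in between: they are compressions of M, and
   M_AA, M_BB are in turn compressions of them. *)

Section PosDef.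
Variable R : realFieldType.

Lemma posdef_compress m k (M : 'M[R]_m) (Q : 'M[R]_(m, k)) :
  posdef M -> Q^T *m Q = 1%:M -> posdef (Q^T *m M *m Q).
Proof.
move=> [symM posM] QTQ; split; first by rewrite !trmx_mul trmxK symM mulmxA.
move=> x x_neq0.
have Qx_neq0 : Q *m x != 0.
  apply: contra x_neq0 => /eqP Qx0; apply/eqP.
  by rewrite -[x]mul1mx -QTQ -mulmxA Qx0 mulmx0.
by have := posM _ Qx_neq0; rewrite trmx_mul !mulmxA.
Qed.

Lemma posdef_unitmx m (M : 'M[R]_m) : posdef M -> M \in unitmx.
Proof.
move=> [_ posM]; rewrite unitmxE unitfE; apply/negP => /det0P [v v_neq0 vM0].
have vT_neq0 : v^T != 0.
  by apply: contra v_neq0 => /eqP vT0; rewrite -[v]trmxK vT0 linear0.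
by have := posM _ vT_neq0; rewrite trmxK vM0 mul0mx mxE ltxx.
Qed.

Lemma posdef_quad_ge0 m (M : 'M[R]_m) (w : 'cV[R]_m) :
  posdef M -> 0 <= (w^T *m M *m w) 0 0.
Proof.
move=> [_ posM]; have [->|w_neq0] := eqVneq w 0; first by rewrite mulmx0 mxE.
exact: ltW (posM _ w_neq0).
Qed.

Lemma posdef_block_ul m1 m2 (Aul : 'M[R]_m1) Aur Adl (Adr : 'M[R]_m2) :
  posdef (block_mx Aul Aur Adl Adr) -> posdef Aul.
Proof.
move=> /(posdef_compress (Q := col_mx 1%:M 0)).
rewrite tr_col_mx trmx1 trmx0 mul_row_col mul1mx mul0mx addr0 => /(_ erefl).
by rewrite mul_row_block mul_row_col !mul1mx !mul0mx !addr0 mulmx1 mulmx0 addr0.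
Qed.

Lemma posdef_block_dr m1 m2 (Aul : 'M[R]_m1) Aur Adl (Adr : 'M[R]_m2) :
  posdef (block_mx Aul Aur Adl Adr) -> posdef Adr.
Proof.
move=> /(posdef_compress (Q := col_mx 0 1%:M)).
rewrite tr_col_mx trmx1 trmx0 mul_row_col mul1mx mul0mx add0r => /(_ erefl).
by rewrite mul_row_block mul_row_col !mul1mx !mul0mx !add0r mulmx1 mulmx0 add0r.
Qed.

Lemma quad_form_shift m k (P : 'M[R]_m) (Q : 'M[R]_(m, k))
    (a : 'cV[R]_m) (c : 'cV[R]_k) :
  P \in unitmx -> P^T = P ->
  (a + invmx P *m Q *m c)^T *m P *m (a + invmx P *m Q *m c) =
    a^T *m P *m a + a^T *m Q *m c + c^T *m Q^T *m a
    + c^T *m (Q^T *m invmx P *m Q) *m c.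
Proof.
move=> unitP symP.
have shiftT : (invmx P *m Q)^T *m P = Q^T.
  by rewrite trmx_mul trmx_inv symP -mulmxA mulVmx // mulmx1.
rewrite [(_ + _)^T]linearD /= !mulmxDr !mulmxDl.
have -> : a^T *m P *m (invmx P *m Q *m c) = a^T *m Q *m c.
  by rewrite -!mulmxA mulKVmx.
have -> : (invmx P *m Q *m c)^T *m P *m a = c^T *m Q^T *m a.
  by rewrite trmx_mul -[c^T *m _ *m P]mulmxA shiftT.
have -> : (invmx P *m Q *m c)^T *m P *m (invmx P *m Q *m c)
    = c^T *m (Q^T *m invmx P *m Q) *m c.
  by rewrite trmx_mul -[c^T *m _ *m P]mulmxA shiftT !mulmxA.
by rewrite !addrA (addrAC _ (c^T *m _ *m a)).
Qed.

End PosDef.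

Section Embedding.
Variables (R : realFieldType) (n : nat).
Implicit Types (X Y : {set 'I_n}) (M : 'M[R]_n).

Definition embmx X : 'M[R]_(n, #|X|) := \matrix_(i, k) (i == enum_val k)%:R.

Lemma tr_embmx_mulE X m (M : 'M[R]_(n, m)) k j :
  ((embmx X)^T *m M) k j = M (enum_val k) j.
Proof.
rewrite !mxE (bigD1 (enum_val k)) //= big1 ?addr0; first by rewrite !mxE eqxx mul1r.
by move=> i /negPf i_neq; rewrite !mxE i_neq mul0r.
Qed.

Lemma mul_embmxE X m (M : 'M[R]_(m, n)) j k :
  (M *m embmx X) j k = M j (enum_val k).
Proof.
rewrite !mxE (bigD1 (enum_val k)) //= big1 ?addr0; first by rewrite !mxE eqxx mulr1.
by move=> i /negPf i_neq; rewrite !mxE i_neq mulr0.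
Qed.

Lemma subME X Y M : subM X Y M = (embmx X)^T *m M *m embmx Y.
Proof. by apply/matrixP=> k l; rewrite mul_embmxE tr_embmx_mulE mxE. Qed.

Lemma subM_trmx X Y M : M^T = M -> (subM X Y M)^T = subM Y X M.
Proof. by move=> symM; rewrite !subME !trmx_mul trmxK symM mulmxA. Qed.

Lemma quad_form_embmx M X Y p (u : 'M[R]_(#|X|, p)) (v : 'M[R]_(#|Y|, p)) :
  (embmx X *m u)^T *m M *m (embmx Y *m v) = u^T *m subM X Y M *m v.
Proof. by rewrite subME trmx_mul !mulmxA. Qed.

Lemma tr_embmx_mul_embmx X : (embmx X)^T *m embmx X = 1%:M.
Proof.
by apply/matrixP=> k l; rewrite tr_embmx_mulE !mxE (inj_eq enum_val_inj).
Qed.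

Lemma tr_embmx_mul_disjoint X Y :
  [disjoint X & Y] -> (embmx X)^T *m embmx Y = 0.
Proof.
move=> dXY; apply/matrixP=> k l; rewrite tr_embmx_mulE !mxE.
case: eqP => // kl; have := enum_valP l; rewrite -kl.
by rewrite (disjointFr dXY (enum_valP k)).
Qed.

Lemma embmx_mul_tr X :
  embmx X *m (embmx X)^T = \matrix_(i, j) ((i == j) && (i \in X))%:R.
Proof.
apply/matrixP=> i j; rewrite !mxE; have [iX|iNX] := boolP (i \in X); last first.
  rewrite andbF big1 // => k _; rewrite !mxE; case: eqP => [ik|]; last by rewrite mul0r.
  by move: (enum_valP k); rewrite -ik (negPf iNX).
rewrite andbT (bigD1 (enum_rank_in iX i)) //= big1 ?addr0.
  by rewrite !mxE enum_rankK_in // eqxx mul1r eq_sym.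
move=> k k_neq; rewrite !mxE; case: eqP => [ik|]; last by rewrite mul0r.
by move: k_neq; rewrite [X in enum_rank_in _ X]ik enum_valK_in eqxx.
Qed.

Lemma embmx_partition_of_unity (A B C : {set 'I_n}) :
  [disjoint A & B] -> [disjoint A & C] -> [disjoint B & C] ->
  A :|: B :|: C = [set: 'I_n] ->
  embmx A *m (embmx A)^T + embmx C *m (embmx C)^T + embmx B *m (embmx B)^T
    = 1%:M.
Proof.
move=> dAB dAC dBC cover; apply/matrixP => i j; rewrite !embmx_mul_tr !mxE.
have [_|] := eqVneq i j => /=; last by rewrite !addr0.
have : i \in A :|: B :|: C by rewrite cover inE.
rewrite !inE => /orP[/orP[] iX|iX].
- by rewrite iX (disjointFr dAB iX) (disjointFr dAC iX) !addr0.
- by rewrite iX (disjointFl dAB iX) (disjointFr dBC iX) !add0r.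
- by rewrite iX (disjointFl dAC iX) (disjointFl dBC iX) add0r addr0.
Qed.

Lemma block_subME X Y M :
  block_mx (subM X X M) (subM X Y M) (subM Y X M) (subM Y Y M)
  = (row_mx (embmx X) (embmx Y))^T *m M *m row_mx (embmx X) (embmx Y).
Proof. by rewrite tr_row_mx mul_col_mx mul_col_row !subME. Qed.

Lemma tr_row_embmx_mul X Y : [disjoint X & Y] ->
  (row_mx (embmx X) (embmx Y))^T *m row_mx (embmx X) (embmx Y) = 1%:M.
Proof.
move=> dXY; rewrite tr_row_mx mul_col_row !tr_embmx_mul_embmx.
rewrite tr_embmx_mul_disjoint // tr_embmx_mul_disjoint 1?disjoint_sym //.
by rewrite -scalar_mx_block.
Qed.

Lemma posdef_block_subM X Y M : [disjoint X & Y] -> posdef M ->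
  posdef (block_mx (subM X X M) (subM X Y M) (subM Y X M) (subM Y Y M)).
Proof.
by move=> dXY posM; rewrite block_subME; apply: posdef_compress posM _;
  apply: tr_row_embmx_mul.
Qed.

Lemma posdef_subM X M : posdef M -> posdef (subM X X M).
Proof.
by move=> posM; rewrite subME; apply: posdef_compress (tr_embmx_mul_embmx X).
Qed.

End Embedding.

Arguments embmx {R n} X.

Definition schur_compl (R : realFieldType) n (X Y : {set 'I_n}) (M : 'M[R]_n) :=
  subM Y Y M - subM Y X M *m invmx (subM X X M) *m subM X Y M.

Lemma schur_compl_trmx (R : realFieldType) n (X Y : {set 'I_n}) (M : 'M[R]_n) :
  M^T = M -> (schur_compl X Y M)^T = schur_compl X Y M.
Proof.
move=> symM; rewrite /schur_compl raddfB /= !trmx_mul trmx_inv !subM_trmx //.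
by rewrite mulmxA.
Qed.

Section SeparatedBlocks.
Variables (R : realFieldType) (n : nat) (A B C : {set 'I_n}) (M : 'M[R]_n).
Hypotheses (dAB : [disjoint A & B]) (dAC : [disjoint A & C])
  (dBC : [disjoint B & C]) (cover : A :|: B :|: C = [set: 'I_n]).
Hypotheses (symM : M^T = M) (MAB0 : subM A B M = 0).

Let MAA := subM A A M.
Let MBB := subM B B M.
Let schur_sum := schur_compl A C M + schur_compl B C M - subM C C M.

Lemma quad_form_separated (a : 'cV[R]_#|A|) (c : 'cV[R]_#|C|) (b : 'cV[R]_#|B|) :
  MAA \in unitmx -> MBB \in unitmx ->
  let x := embmx A *m a + embmx C *m c + embmx B *m b in
  let a' := a + invmx MAA *m subM A C M *m c in
  let b' := b + invmx MBB *m subM B C M *m c in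
  x^T *m M *m x = a'^T *m MAA *m a' + b'^T *m MBB *m b' + c^T *m schur_sum *m c.
Proof.
move=> unitA unitB x a' b'.
have MBA0 : subM B A M = 0 by rewrite -subM_trmx // MAB0 trmx0.
rewrite /a' /b' !quad_form_shift ?subM_trmx //.
rewrite /x [(_ + _)^T]linearD /= [(_ + _)^T]linearD /= !mulmxDr !mulmxDl.
rewrite !quad_form_embmx MAB0 MBA0 !mulmxN !mulNmx !mulmx0 !mul0mx ![in RHS]mulmxA.
(* all terms are 1x1 matrices, which are determined by their trace *)
apply/matrixP => i j; rewrite !ord1 -!trace_mx11.
rewrite !(mxtraceD, raddfN) /= !mxtrace0.
lra.
Qed.

Lemma posdef_schur_sum : posdef M -> posdef schur_sum.
Proof.
move=> posM; have unitA := posdef_unitmx (posdef_subM A posM).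
have unitB := posdef_unitmx (posdef_subM B posM).
split; first by rewrite /schur_sum raddfB raddfD /= !schur_compl_trmx ?subM_trmx.
move=> c c_neq0.
(* the minimising choice of a and b makes the two completed squares vanish *)
pose a := - (invmx MAA *m subM A C M *m c).
pose b := - (invmx MBB *m subM B C M *m c).
have x_neq0 : embmx A *m a + embmx C *m c + embmx B *m b != 0.
  apply: contra c_neq0 => /eqP x0; apply/eqP.
  have := congr1 (mulmx (embmx C)^T) x0.
  rewrite !mulmxDr !mulmxA tr_embmx_mul_embmx !tr_embmx_mul_disjoint 1?disjoint_sym //.
  by rewrite !mul0mx mul1mx add0r addr0 mulmx0.
have := posM.2 _ x_neq0; rewrite quad_form_separated //.
by rewrite /a /b !addNr !raddf0 !add0r.
Qed.

Lemma posdef_of_separated :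
  posdef MAA -> posdef MBB -> posdef schur_sum -> posdef M.
Proof.
move=> posA posB posS; split => // x x_neq0.
have decomp_x : x = embmx A *m ((embmx A)^T *m x) + embmx C *m ((embmx C)^T *m x)
                    + embmx B *m ((embmx B)^T *m x).
  by rewrite !mulmxA -!mulmxDl embmx_partition_of_unity // mul1mx.
move: x_neq0; rewrite decomp_x.
move: ((embmx A)^T *m x) ((embmx C)^T *m x) ((embmx B)^T *m x) => a c b x_neq0.
rewrite quad_form_separated ?posdef_unitmx // -trace_mx11 !mxtraceD !trace_mx11.
have qa := posdef_quad_ge0 (a + invmx MAA *m subM A C M *m c) posA.
have qb := posdef_quad_ge0 (b + invmx MBB *m subM B C M *m c) posB.
have [c0|c_neq0] := eqVneq c 0; last by have := posS.2 _ c_neq0; lra.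
move: qa qb; rewrite c0 !raddf0 !addr0 [X in _ + X]mxE addr0 => qa qb.
move: x_neq0; rewrite c0 mulmx0 addr0 => x_neq0.
have [a0|a_neq0] := eqVneq a 0; last by have := posA.2 _ a_neq0; lra.
have [b0|b_neq0] := eqVneq b 0; last by have := posB.2 _ b_neq0; lra.
by move: x_neq0; rewrite a0 b0 !mulmx0 !addr0 eqxx.
Qed.

End SeparatedBlocks.

Lemma restrictG_sym (R : pzRingType) n (e : rel 'I_n) (N : 'M[R]_n) :
  symmetric e -> N^T = N -> (restrictG e N)^T = restrictG e N.
Proof.
move=> symE /matrixP symN; apply/matrixP => i j; rewrite !mxE eq_sym symE.
by have := symN j i; rewrite mxE => ->.
Qed.

Lemma restrictG_separated (R : pzRingType) n (e : rel 'I_n) (N : 'M[R]_n)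
    (A B C : {set 'I_n}) :
  [disjoint A & B] -> [disjoint A & C] -> [disjoint B & C] ->
  separates e C A B -> subM A B (restrictG e N) = 0.
Proof.
move=> dAB dAC dBC sep; apply/matrixP => i j; rewrite !mxE.
have iA := enum_valP i; have jB := enum_valP j.
have -> : (enum_val i == enum_val j :> 'I_n) = false.
  by apply/negbTE; apply: contraTneq jB => <-; rewrite (disjointFr dAB iA).
case eij : (e _ _) => //=.
(* an edge from A to B is a path avoiding C *)
have := sep (enum_val i) [:: enum_val j] iA; rewrite /= eij /= => /(_ isT jB).
by rewrite (disjointFr dAC iA) (disjointFr dBC jB).
Qed.

Theorem proposition2 (R : realFieldType) (n : nat) (e : rel 'I_n)
  (A B C : {set 'I_n}) (N : 'M[R]_n) :
  symmetric e -> irreflexive e ->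
  A != set0 -> B != set0 -> C != set0 ->
  [disjoint A & B] -> [disjoint A & C] -> [disjoint B & C] ->
  A :|: B :|: C = [set: 'I_n] ->
  separates e C A B -> complete e C ->
  posdef N ->
  let M := restrictG e N in
  let S1 := subM C C M - subM C A M *m invmx (subM A A M) *m subM A C M in
  let S2 := subM C C M - subM C B M *m invmx (subM B B M) *m subM B C M in
  (posdef M <->
     [/\ posdef (block_mx (subM A A M) (subM A C M) (subM C A M) (subM C C M)),
         posdef (block_mx (subM C C M) (subM C B M) (subM B C M) (subM B B M))
       & posdef (S1 + S2 - subM C C M)])
  /\
  (posdef M <->
     [/\ posdef (subM A A M), posdef (subM B B M)
       & posdef (S1 + S2 - subM C C M)]).
Proof.
move=> symE _ _ _ _ dAB dAC dBC cover sep _ [symN _] M S1 S2.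
have symM : M^T = M := restrictG_sym symE symN.
have MAB0 : subM A B M = 0 := restrictG_separated N dAB dAC dBC sep.
have separatedP : posdef M <->
    [/\ posdef (subM A A M), posdef (subM B B M) & posdef (S1 + S2 - subM C C M)].
  split=> [posM|[]]; last exact: posdef_of_separated dAB dAC dBC cover symM MAB0.
  split; [exact: posdef_subM posM | exact: posdef_subM posM | ].
  exact: posdef_schur_sum dAC dBC symM MAB0 posM.
split=> //; split=> [posM|[posAC posCB posS]]; last first.
  apply/separatedP; split=> //.
  - exact: posdef_block_ul posAC.
  - exact: posdef_block_dr posCB.
have [_ _ posS] := separatedP.1 posM.
by split=> //; apply: posdef_block_subM posM; rewrite // disjoint_sym.
Qed.
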